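(* Let $K$ be an algebraically closed field with $\operatorname{char}K=p>0$. Let $G$ be a finite subgroup of $SL_2(K)$ and $Q$ a $p$-Sylow subgroup of $G$. Assume $Q$ is normal in $G$, $Q$ is elementary abelian, and $G/Q$ is cyclic. Then there exist a positive integer $n$ with $p\nmid n$, a primitive $n$-th root of unity $\zeta_n\in K$, an $\mathbb{F}_p(\zeta_n^2)$-subspace $V\subseteq K$ of finite $\mathbb{F}_p$-dimension $r$, an element $b\in K$, and $g\in SL_2(K)$ such that $gGg^{-1}$ is the subgroup generated by the matrices $\begin{pmatrix}1&v\\0&1\end{pmatrix}$ ($v\in V$) together with $\begin{pmatrix}\zeta_n&b\\0&\zeta_n^{-1}\end{pmatrix}$; i.e. $G$ is conjugate to a group $G(n,p^r)$.
   Context: For $p\nmid n$, $s=[\mathbb{F}_p(\zeta_n^2):\mathbb{F}_p]$ and $s\mid r$, the group $G(n,p^r)$ is realized inside $SL_2(K)$ as the subgroup generated by $\begin{pmatrix}1&v\\0&1\end{pmatrix}$, $v\in V$, and $\begin{pmatrix}\zeta_n&a\\0&\zeta_n^{-1}\end{pmatrix}$, where $V\subseteq K$ is an $\mathbb{F}_p(\zeta_n^2)$-subspace with $\dim_{\mathbb{F}_p}V=r$ and $a\in K$ (with $a=0$ if $n\le 2$). *)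

From HB Require Import structures.
From mathcomp Require Import all_boot all_order all_algebra.
From mathcomp Require Import finmap.
Set Implicit Arguments. Unset Strict Implicit. Unset Printing Implicit Defensive.
Import Order.TTheory GRing.Theory Num.Theory.
Local Open Scope fset_scope.
Local Open Scope ring_scope.

Section Defs.
Variable K : fieldType.
Local Notation M := 'M[K]_2.

Definition mx2 (a b c d : K) : M :=
  \matrix_(i < 2, j < 2)
    if (i : nat) == 0%N then (if (j : nat) == 0%N then a else b)
    else (if (j : nat) == 0%N then c else d).

Definition is_subgroup (H : {fset M}) : Prop :=
  [/\ (1 : M) \in H,
      (forall x y, x \in H -> y \in H -> x * y \in H) &
      (forall x, x \in H -> x \is a GRing.unit /\ x^-1 \in H)].

Definition finite_SL2_subgroup (G : {fset M}) : Prop :=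
  is_subgroup G /\ (forall x, x \in G -> \det x = 1).

Definition is_pSylow (p : nat) (G Q : {fset M}) : Prop :=
  [/\ is_subgroup Q, Q `<=` G & #|` Q| = (#|` G|)`_p]%N.

Definition is_normal_in (G Q : {fset M}) : Prop :=
  forall g q, g \in G -> q \in Q -> g * q * g^-1 \in Q.

Definition elem_abelian (p : nat) (Q : {fset M}) : Prop :=
  forall x y, x \in Q -> y \in Q -> x * y = y * x /\ x ^+ p = 1.

(* G/Q cyclic: some x in G whose coset generates G/Q *)
Definition quotient_cyclic (G Q : {fset M}) : Prop :=
  exists2 x, x \in G & forall g, g \in G -> exists k : nat, exists2 q, q \in Q & g = x ^+ k * q.

(* subgroup of GL_2(K) generated by a set S (all subgroups, not only finite) *)
Definition subgroup_pred (H : M -> Prop) : Prop :=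
  [/\ H 1, (forall x y, H x -> H y -> H (x * y)) &
      (forall x, H x -> x \is a GRing.unit /\ H x^-1)].

Definition generated (S : M -> Prop) (x : M) : Prop :=
  forall H : M -> Prop, subgroup_pred H -> (forall y, S y -> H y) -> H x.

(* the subfield F_p(z) of K (z algebraic over the prime field F_p):
   values at z of polynomials with coefficients in the prime subfield *)
Definition Fp_adj (z : K) (x : K) : Prop :=
  exists q : {poly K}, (forall i, exists m : nat, q`_i = m%:R) /\ x = q.[z].

Definition is_Fp_adj_subspace (z : K) (V : {fset K}) : Prop :=
  [/\ (0 : K) \in V,
      (forall u v, u \in V -> v \in V -> u + v \in V) &
      (forall c v, Fp_adj z c -> v \in V -> c * v \in V)].

Definition Gnq_gens (zeta b : K) (V : {fset K}) (x : M) : Prop :=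
  (exists2 v, v \in V & x = mx2 1 v 0 1) \/ x = mx2 zeta b 0 zeta^-1.

End Defs.

(* A nontrivial p-element of SL_2(K) is conjugate to a unipotent [[1,a],[0,1]] with a <> 0,
   since in characteristic p there are no nontrivial p-th roots of unity.  Choosing it in Q,
   the abelian group Q is forced into the unipotent matrices [[1,v],[0,1]], and G, which
   normalizes Q, into the upper triangular ones (if Q = 1, triangularize a generator x of G/Q
   instead).  Then g Q g^-1 = {[[1,v],[0,1]] : v in V} with |V| = |Q| and
   g x g^-1 = [[z,b],[0,z^-1]]; conjugation by the latter multiplies V by z^2, so V is an
   F_p(z^2)-space, and z has finite order, prime to p for the same reason as above.
   Finally G = <x> Q yields the generators of G(n, p^r). *)

From HB Require Import structures.
From mathcomp Require Import all_boot all_order all_algebra.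
From mathcomp Require Import finmap.
From mathcomp Require Import ring.
Set Implicit Arguments. Unset Strict Implicit. Unset Printing Implicit Defensive.
Import Order.TTheory GRing.Theory Num.Theory.
Local Open Scope fset_scope.
Local Open Scope ring_scope.

Lemma unitmx_det1 (R : comUnitRingType) n (A : 'M[R]_n.+1) :
  \det A = 1 -> A \is a GRing.unit.
Proof. by move=> detA; rewrite -[_ \is a _]/(_ \in unitmx) unitmxE detA unitr1. Qed.

Lemma det_conjr (R : comUnitRingType) n (g y : 'M[R]_n.+1) : g \is a GRing.unit ->
  \det (g * y * g^-1) = \det y.
Proof.
move=> g_unit; rewrite -!mulmxE !det_mulmx -[g^-1]/(invmx g) det_inv.
by rewrite mulrC mulrA mulVr ?mul1r // -unitmxE.
Qed.

Section Mx2.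
Variable K : fieldType.
Implicit Types (A Y : 'M[K]_2) (a b c d : K).

Lemma mx2_eta A : A = mx2 (A 0 0) (A 0 1) (A 1 0) (A 1 1).
Proof.
apply/matrixP => i j; rewrite !mxE.
by case: i => [[|[|//]] ?]; case: j => [[|[|//]] ?]; congr (A _ _); apply: val_inj.
Qed.

Lemma mx2_inj a b c d a' b' c' d' :
  mx2 a b c d = mx2 a' b' c' d' -> [/\ a = a', b = b', c = c' & d = d'].
Proof.
move=> E; have entry i j := congr1 (fun M : 'M[K]_2 => M i j) E.
by move: (entry 0 0) (entry 0 1) (entry 1 0) (entry 1 1); rewrite !mxE.
Qed.

Lemma mx2M a b c d a' b' c' d' :
  mx2 a b c d * mx2 a' b' c' d'
  = mx2 (a * a' + b * c') (a * b' + b * d') (c * a' + d * c') (c * b' + d * d').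
Proof.
apply/matrixP => i j; rewrite -[_ * _]/(_ *m _) !mxE !big_ord_recl big_ord0 addr0 !mxE.
by case: i => [[|[|//]] ?]; case: j => [[|[|//]] ?].
Qed.

Lemma mx2_1 : mx2 1 0 0 1 = 1 :> 'M[K]_2.
Proof. by rewrite [RHS]mx2_eta !mxE. Qed.

Lemma det_mx2 a b c d : \det (mx2 a b c d) = a * d - b * c.
Proof.
rewrite (expand_det_row _ 0) !big_ord_recl big_ord0 addr0 /cofactor !det_mx11 !mxE /=.
by rewrite expr0 expr1 !mul1r mulN1r mulrN.
Qed.

Lemma mx2_inv a b c d : a * d - b * c = 1 -> (mx2 a b c d)^-1 = mx2 d (-b) (-c) a.
Proof.
move=> det1; have unit_mx : mx2 a b c d \is a GRing.unit.
  by apply: unitmx_det1; rewrite det_mx2.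
apply: (mulrI unit_mx); rewrite divrr // mx2M -mx2_1.
by congr mx2; rewrite -?det1; ring.
Qed.

Lemma upper_expr A k : A 1 0 = 0 ->
  [/\ (A ^+ k) 1 0 = 0, (A ^+ k) 0 0 = A 0 0 ^+ k & (A ^+ k) 1 1 = A 1 1 ^+ k].
Proof.
move=> A10; elim: k => [|k [h10 h00 h11]]; first by rewrite !expr0 -mx2_1 !mxE.
move: h10 h00 h11; rewrite exprS; set B := A ^+ k => h10 h00 h11.
rewrite [A]mx2_eta [B]mx2_eta mx2M !mxE /=.
by rewrite A10 h10 h00 h11 !(mul0r, mulr0, addr0, add0r) !exprS.
Qed.

Lemma upper_det1 A : A 1 0 = 0 -> \det A = 1 ->
  A 0 0 != 0 /\ A = mx2 (A 0 0) (A 0 1) 0 (A 0 0)^-1.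
Proof.
move=> A10 detA; have det1 : A 0 0 * A 1 1 = 1.
  by rewrite -detA [in RHS](mx2_eta A) det_mx2 A10 mulr0 subr0.
have A00 : A 0 0 != 0.
  by apply/eqP => A0; move/eqP: det1; rewrite A0 mul0r eq_sym oner_eq0.
by split=> //; rewrite [LHS]mx2_eta A10 -[A 1 1](mulKf A00) det1 mulr1.
Qed.

Definition unip (v : K) : 'M[K]_2 := mx2 1 v 0 1.

Lemma unip0 : unip 0 = 1.
Proof. exact: mx2_1. Qed.

Lemma unipD u v : unip (u + v) = unip u * unip v.
Proof. by rewrite /unip mx2M; congr mx2; ring. Qed.

Lemma upper_unip_conj z b v : z != 0 ->
  mx2 z b 0 z^-1 * unip v = unip (z ^+ 2 * v) * mx2 z b 0 z^-1.
Proof. by move=> z0; rewrite /unip !mx2M; congr mx2; field. Qed.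

Lemma unip_normalizer Y a c : a != 0 -> Y * unip a = unip c * Y -> Y 1 0 = 0.
Proof.
move=> a0; rewrite [Y]mx2_eta /unip !mx2M => /mx2_inj[_ _ _].
rewrite !(mulr1, mul1r, mul0r, add0r) => /(canRL (addrK _)).
rewrite subrr => /eqP; rewrite mulf_eq0 (negPf a0) orbF => /eqP.
by rewrite mxE.
Qed.

End Mx2.

Section PcharRootsOfUnity.
Variables (K : fieldType) (p : nat).
Hypothesis pcharKp : p \in [pchar K].

Lemma pchar_expr_eq1 (a : K) : a ^+ p = 1 -> a = 1.
Proof.
move=> ap; apply: (fmorph_inj (pFrobenius_aut pcharKp)).
by rewrite rmorph1 /= pFrobenius_autE ap.
Qed.

Lemma pchar_exprpn_eq1 e (a : K) : a ^+ (p ^ e) = 1 -> a = 1.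
Proof.
elim: e a => [|e IH] a; first by rewrite expn0 expr1.
by rewrite expnSr exprM => /pchar_expr_eq1 /IH.
Qed.

Lemma pchar_prim_root_order m (z : K) : (0 < m)%N -> z ^+ m = 1 ->
  exists n, [/\ (0 < n)%N, ~~ (p %| n)%N & n.-primitive_root z].
Proof.
move=> m_gt0 zm.
have zm' : z ^+ m`_p^' = 1.
  apply: (@pchar_exprpn_eq1 (logn p m)).
  by rewrite -exprM mulnC -p_part partnC.
have [n prim_z n_dvd] := prim_order_exists (part_gt0 _ _) zm'.
exists n; split=> //; first exact: prim_order_gt0 prim_z.
have : ~~ (p %| m`_p^')%N by rewrite -p'natE ?(pcharf_prime pcharKp) ?part_pnat.
by apply: contraNN => /dvdn_trans; apply.
Qed.

Lemma upper_pelt_unip (A : 'M[K]_2) : A 1 0 = 0 -> A ^+ p = 1 -> A = unip (A 0 1).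
Proof.
move=> A10 Ap; have [_ Ap00 Ap11] := upper_expr p A10.
have A00 : A 0 0 = 1 by apply: pchar_expr_eq1; rewrite -Ap00 Ap -mx2_1 mxE.
have A11 : A 1 1 = 1 by apply: pchar_expr_eq1; rewrite -Ap11 Ap -mx2_1 mxE.
by rewrite [LHS]mx2_eta A00 A10 A11.
Qed.

End PcharRootsOfUnity.

Section Conjugation.
Variables (R : unitRingType) (g : R).
Hypothesis g_unit : g \is a GRing.unit.

Lemma conjr1 : g * 1 * g^-1 = 1.
Proof. by rewrite mulr1 divrr. Qed.

Lemma conjrM y z : g * (y * z) * g^-1 = (g * y * g^-1) * (g * z * g^-1).
Proof. by rewrite !mulrA divrK. Qed.

Lemma conjrX y k : g * y ^+ k * g^-1 = (g * y * g^-1) ^+ k.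
Proof. by elim: k => [|k IH]; rewrite ?expr0 ?conjr1 // !exprS conjrM IH. Qed.

Lemma conjrV y : y \is a GRing.unit ->
  g * y * g^-1 \is a GRing.unit /\ (g * y * g^-1)^-1 = g * y^-1 * g^-1.
Proof.
move=> y_unit; have yV : (g * y * g^-1) * (g * y^-1 * g^-1) = 1.
  by rewrite -conjrM mulrV // conjr1.
have Vy : (g * y^-1 * g^-1) * (g * y * g^-1) = 1.
  by rewrite -conjrM mulVr // conjr1.
have cy_unit : g * y * g^-1 \is a GRing.unit by apply/unitrP; exists (g * y^-1 * g^-1).
by split=> //; rewrite -[RHS](mulKr cy_unit) yV mulr1.
Qed.

Lemma conjr_inj y z : g * y * g^-1 = g * z * g^-1 -> y = z.
Proof.
have gV_unit : g^-1 \is a GRing.unit by rewrite unitrV.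
by move/(mulIr gV_unit)/(mulrI g_unit).
Qed.

Lemma conjr_normal y q : y \is a GRing.unit ->
  (g * y * g^-1) * (g * q * g^-1) = (g * (y * q * y^-1) * g^-1) * (g * y * g^-1).
Proof. by move=> y_unit; rewrite -!conjrM divrK. Qed.

End Conjugation.

Lemma finite_powers_order (R : unitRingType) (S : {fset R}) x :
  x \is a GRing.unit -> (forall k, x ^+ k \in S) -> exists2 m, (0 < m)%N & x ^+ m = 1.
Proof.
move=> x_unit xS; set s := [seq x ^+ i | i <- iota 0 (#|`S|).+1].
have : ~~ uniq s.
  apply/negP => s_uniq.
  have sS : {subset s <= enum_fset S} by move=> y /mapP [i _ ->].
  by have := uniq_leq_size s_uniq sS; rewrite size_map size_iota ltnn.
case/(uniqPn 0) => i [j []]; rewrite size_map size_iota => ij jlt.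
rewrite !(nth_map 0%N) ?size_iota ?(ltn_trans ij) // !nth_iota ?(ltn_trans ij) //.
rewrite !add0n => xij; exists (j - i)%N; first by rewrite subn_gt0.
by apply: (mulrI (unitrX i x_unit)); rewrite -exprD subnKC ?(ltnW ij) // mulr1.
Qed.

Lemma triangularize_mx2 (K : closedFieldType) (A : 'M[K]_2) :
  exists g : 'M[K]_2, \det g = 1 /\ (g * A * g^-1) 1 0 = 0.
Proof.
have conj_entry a b c d : a * d - b * c = 1 ->
    (mx2 a b c d * A * (mx2 a b c d)^-1) 1 0
    = (c * A 0 0 + d * A 1 0) * d - (c * A 0 1 + d * A 1 1) * c.
  by move=> det1; rewrite mx2_inv // [A]mx2_eta !mx2M !mxE /=; ring.
have [A10|A10] := eqVneq (A 1 0) 0.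
  by exists 1; rewrite det1 mul1r invr1 mulr1.
have [A01|A01] := eqVneq (A 0 1) 0.
  exists (mx2 0 1 (-1) 0); rewrite det_mx2 conj_entry ?A01; last by ring.
  by split; ring.
have [t tE] : exists t : K, t ^+ 2 = (A 0 0 - A 1 1) / A 0 1 * t + A 1 0 / A 0 1.
  have [t tE] := @solve_monicpoly K 2 (nth 0 [:: A 1 0 / A 0 1; (A 0 0 - A 1 1) / A 0 1]) isT.
  by exists t; rewrite tE !big_ord_recl big_ord0 /= addr0 expr0 mulr1 expr1 addrC.
exists (mx2 1 0 t 1); rewrite det_mx2 conj_entry; last by ring.
split; first by ring.
have tE' : A 0 1 * t ^+ 2 = (A 0 0 - A 1 1) * t + A 1 0 by rewrite tE; field.
transitivity ((A 0 0 - A 1 1) * t + A 1 0 - A 0 1 * t ^+ 2); first by ring.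
by rewrite tE' subrr.
Qed.

Lemma Fp_adj_subspace_of_closed (K : fieldType) (z : K) (V : {fset K}) :
    0 \in V -> {in V &, forall u v, u + v \in V} -> {in V, forall v, z * v \in V} ->
  is_Fp_adj_subspace z V.
Proof.
move=> V0 VD Vz; split=> // _ v [P [P_nat ->]] vV.
have Vexp i w : w \in V -> z ^+ i * w \in V.
  by elim: i w => [|i IH] w wV; rewrite ?expr0 ?mul1r // exprSr -mulrA IH ?Vz.
have Vnat k w : w \in V -> w *+ k \in V.
  by elim: k => [|k IH] wV; rewrite ?mulr0n // mulrS VD ?IH.
rewrite horner_coef mulr_suml; apply: (big_ind (fun w => w \in V)) => // i _.
by have [k ->] := P_nat i; rewrite -mulrA mulr_natl Vnat ?Vexp.
Qed.

Section Generated.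
Variables (K : fieldType) (S : 'M[K]_2 -> Prop).

Lemma generated_gen y : S y -> generated S y.
Proof. by move=> Sy H _; apply. Qed.

Lemma generatedM y z : generated S y -> generated S z -> generated S (y * z).
Proof.
move=> Sy Sz H Hsub SH; have [_ HM _] := Hsub.
by apply: HM; [apply: Sy | apply: Sz].
Qed.

Lemma generatedX y k : generated S y -> generated S (y ^+ k).
Proof.
move=> Sy; elim: k => [|k IH]; last by rewrite exprS; apply: generatedM.
by rewrite expr0 => H Hsub _; have [] := Hsub.
Qed.

End Generated.

Lemma conj_subgroup_pred (K : fieldType) (G : {fset 'M[K]_2}) g :
    is_subgroup G -> g \is a GRing.unit ->
  subgroup_pred (fun y => exists2 y', y' \in G & y = g * y' * g^-1).
Proof.
move=> [G1 GM GV] g_unit; split.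
- by exists 1; rewrite ?conjr1.
- by move=> _ _ [y1 y1G ->] [y2 y2G ->]; exists (y1 * y2); rewrite ?conjrM ?GM.
- move=> _ [y yG ->]; have [y_unit yVG] := GV y yG.
  by have [cy_unit ->] := conjrV g_unit y_unit; split=> //; exists y^-1.
Qed.

Section Triangularization.
Variables (K : fieldType) (p : nat) (G Q : {fset 'M[K]_2}).
Hypotheses (pcharKp : p \in [pchar K]) (Gsub : is_subgroup G).
Hypotheses (Qnormal : is_normal_in G Q) (Qab : elem_abelian p Q).

Definition triangularizes (g : 'M[K]_2) :=
  [/\ \det g = 1, forall y, y \in G -> (g * y * g^-1) 1 0 = 0 &
      forall q, q \in Q -> g * q * g^-1 = unip ((g * q * g^-1) 0 1)].

Lemma triangularizes_nontrivial g q0 : \det g = 1 -> q0 \in Q -> q0 != 1 ->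
  (g * q0 * g^-1) 1 0 = 0 -> triangularizes g.
Proof.
move=> gdet q0Q q0_neq1 u10; have [_ _ GV] := Gsub.
have g_unit := unitmx_det1 gdet.
have conj_pelt q : q \in Q -> (g * q * g^-1) ^+ p = 1.
  by move=> qQ; rewrite -conjrX // (Qab qQ qQ).2 conjr1.
set a := (g * q0 * g^-1) 0 1.
have u_unip : g * q0 * g^-1 = unip a := upper_pelt_unip pcharKp u10 (conj_pelt _ q0Q).
have a_neq0 : a != 0.
  apply: contraNneq q0_neq1 => a0; apply/eqP/(conjr_inj g_unit).
  by rewrite u_unip a0 unip0 conjr1.
have Q_unip q : q \in Q -> g * q * g^-1 = unip ((g * q * g^-1) 0 1).
  move=> qQ; apply: (upper_pelt_unip pcharKp _ (conj_pelt _ qQ)).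
  apply: (unip_normalizer (c := a) a_neq0).
  by rewrite -u_unip -!conjrM // (Qab qQ q0Q).1.
split=> // y yG; have [y_unit _] := GV y yG.
have yq0Q : y * q0 * y^-1 \in Q by apply: Qnormal.
apply: (unip_normalizer a_neq0 (c := (g * (y * q0 * y^-1) * g^-1) 0 1)).
by rewrite -u_unip -Q_unip // conjr_normal.
Qed.

Lemma triangularizes_trivial g x : \det g = 1 -> {in Q, forall q, q = 1} ->
    (forall y, y \in G -> exists k : nat, exists2 q, q \in Q & y = x ^+ k * q) ->
  (g * x * g^-1) 1 0 = 0 -> triangularizes g.
Proof.
move=> gdet Q1 xgen X10; have g_unit := unitmx_det1 gdet.
split=> // [y /xgen[k [q /Q1 -> ->]] | q /Q1 ->].
  by rewrite mulr1 conjrX //; have [] := upper_expr k X10.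
by rewrite conjr1 // -mx2_1 mxE.
Qed.

End Triangularization.

Section BorelForm.
Variables (K : fieldType) (p : nat) (G Q : {fset 'M[K]_2}) (g x : 'M[K]_2).
Hypotheses (pcharKp : p \in [pchar K]) (Gsub : is_subgroup G).
Hypothesis Gdet : forall y, y \in G -> \det y = 1.
Hypotheses (Qsub : is_subgroup Q) (QG : Q `<=` G) (Qcard : (#|`Q| = (#|`G|)`_p)%N).
Hypotheses (Qnormal : is_normal_in G Q) (xG : x \in G).
Hypothesis xgen : forall y, y \in G -> exists k : nat, exists2 q, q \in Q & y = x ^+ k * q.
Hypothesis gtri : triangularizes G Q g.

Let X := g * x * g^-1.
Let z := X 0 0.
Let b := X 0 1.
Let V := [fset (g * q * g^-1) 0 1 | q in Q].

Let g_unit : g \is a GRing.unit.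
Proof. by case: gtri => gdet _ _; apply: unitmx_det1. Qed.

Lemma conj_gen_mx2 : z != 0 /\ X = mx2 z b 0 z^-1.
Proof.
case: gtri => _ Gup _; apply: upper_det1; first exact: Gup.
by rewrite det_conjr // Gdet.
Qed.

Lemma conj_gen_prim_root :
  exists n, [/\ (0 < n)%N, ~~ (p %| n)%N & n.-primitive_root z].
Proof.
have [G1 GM GV] := Gsub.
have xG_exp k : x ^+ k \in G.
  by elim: k => [|k IH]; rewrite ?expr0 // exprS GM.
have [m m_gt0 xm] := finite_powers_order (GV x xG).1 xG_exp.
apply: (pchar_prim_root_order pcharKp m_gt0).
have [_ Gup _] := gtri; have [_ Xm_00 _] := upper_expr m (Gup x xG).
by rewrite /z -Xm_00 /X -conjrX // xm conjr1 // -mx2_1 mxE.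
Qed.

Lemma V_unipP v : v \in V <-> exists2 q, q \in Q & g * q * g^-1 = unip v.
Proof.
case: gtri => _ _ Q_unip; split=> [/imfsetP[q qQ ->] | [q qQ qv]].
  by exists q => //; apply: Q_unip.
by apply/imfsetP; exists q => //=; rewrite qv mxE.
Qed.

Lemma card_V : #|`V| = (p ^ logn p #|`G|)%N.
Proof.
case: gtri => _ _ Q_unip; rewrite -p_part -Qcard; apply/eqP/card_in_imfsetP.
move=> q1 q2 q1Q q2Q /= q12.
by apply: (conjr_inj g_unit); rewrite Q_unip // q12 -Q_unip.
Qed.

Lemma V_Fp_adj_subspace : is_Fp_adj_subspace (z ^+ 2) V.
Proof.
have [Q1 QM _] := Qsub; have [_ _ GV] := Gsub.
have [z_neq0 X_mx2] := conj_gen_mx2.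
apply: Fp_adj_subspace_of_closed.
- by apply/V_unipP; exists 1; rewrite ?unip0 ?conjr1.
- move=> v1 v2 /V_unipP[q1 q1Q qv1] /V_unipP[q2 q2Q qv2]; apply/V_unipP.
  by exists (q1 * q2); rewrite ?QM // conjrM // qv1 qv2 unipD.
move=> v /V_unipP[q qQ qv]; apply/V_unipP.
have x_unit := (GV x xG).1; have X_unit := (conjrV g_unit x_unit).1.
exists (x * q * x^-1); first exact: Qnormal.
apply: (mulIr X_unit); rewrite -conjr_normal // qv -/X X_mx2.
exact: upper_unip_conj.
Qed.

Lemma conj_G_generated y :
  (exists2 y', y' \in G & y = g * y' * g^-1) <-> generated (Gnq_gens z b V) y.
Proof.
have [_ X_mx2] := conj_gen_mx2; case: gtri => _ _ Q_unip.
split=> [[_ /xgen[k [q qQ ->]] ->] | y_gen].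
  rewrite conjrM // conjrX // (Q_unip q qQ); refine (generatedM _ _).
    by refine (generatedX _ (generated_gen _)); right; rewrite -X_mx2.
  refine (generated_gen _); left; exists ((g * q * g^-1) 0 1) => //.
  by apply/V_unipP; exists q; rewrite -?Q_unip.
apply: (y_gen _ (conj_subgroup_pred Gsub g_unit)) => _ [[v /V_unipP[q qQ qv] ->] | ->].
  by exists q; [apply: (fsubsetP QG) | rewrite qv].
by exists x; rewrite // -X_mx2.
Qed.

End BorelForm.

Theorem lemma3p5 (K : closedFieldType) (p : nat) (Hp : p \in [pchar K])
  (G Q : {fset 'M[K]_2}) :
  finite_SL2_subgroup G ->
  is_pSylow p G Q ->
  is_normal_in G Q ->
  elem_abelian p Q ->
  quotient_cyclic G Q ->
  exists (n : nat) (zeta : K) (V : {fset K}) (r : nat) (b : K) (g : 'M[K]_2),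
    [/\ (0 < n)%N /\ ~~ (p %| n)%N, n.-primitive_root zeta,
        is_Fp_adj_subspace (zeta ^+ 2) V /\ #|` V| = (p ^ r)%N,
        \det g = 1 &
        forall x : 'M[K]_2,
          (exists2 y, y \in G & x = g * y * g^-1) <->
          generated (Gnq_gens zeta b V) x].
Proof.
move=> [Gsub Gdet] [Qsub QG Qcard] Qnormal Qab [x xG xgen].
have [g gtri] : exists g, triangularizes G Q g.
  have [/allP Q1 | /allPn[q0 q0Q q0_neq1]] := boolP (all (eq_op^~ 1) (enum_fset Q)).
    have [g [gdet x_up]] := triangularize_mx2 x.
    by exists g; apply: triangularizes_trivial gdet _ xgen x_up => q /Q1 /eqP.
  have [g [gdet q0_up]] := triangularize_mx2 q0.
  by exists g; apply: (triangularizes_nontrivial Hp Gsub Qnormal Qab gdet q0Q).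
have [n [n_gt0 p_ndvd_n prim_z]] := conj_gen_prim_root Hp Gsub xG gtri.
exists n, ((g * x * g^-1) 0 0), [fset (g * q * g^-1) 0 1 | q in Q], (logn p #|`G|),
  ((g * x * g^-1) 0 1), g; split=> //.
- exact: conj (V_Fp_adj_subspace Gsub Gdet Qsub Qnormal xG gtri) (card_V Qcard gtri).
- by case: gtri.
- exact: conj_G_generated.
Qed.
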